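(* Let $k\ge1$ and $A\in\mathbb{C}^{k\times k}$ with $\|A-\mathbbm{1}_k\|<1/k$. For $\mathbf{z}=(z_1,\ldots,z_k)^T\in\mathbb{C}^k$ put $\mathbf{w}=(w_1,\ldots,w_k)^T=A\mathbf{z}$. Then $w_1\cdots w_k\neq0$ for all $\mathbf{z}\in(\partial D)^k$, and \[ \frac{1}{\det(A)}=\frac{1}{(2\pi i)^k}\oint_{\partial D}\cdots\oint_{\partial D}\frac{1}{w_1\cdots w_k}\,dz_1\cdots dz_k . \]
   Context: $\|\cdot\|$ is the Frobenius norm, $\mathbbm{1}_k$ the identity matrix, $\partial D=\{z\in\mathbb{C}:|z|=1\}$ is the unit circle traversed once counterclockwise, and the integral is the iterated contour integral in each variable $z_j$ over $\partial D$ (i.e. over the torus $(\partial D)^k$). *)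

From Stdlib Require Import Reals Lra Arith.
Open Scope R_scope.

Record Cx : Type := mkC { Re : R ; Im : R }.

Definition C0 : Cx := mkC 0 0.
Definition C1 : Cx := mkC 1 0.
Definition Ci : Cx := mkC 0 1.
Definition Cadd (a b : Cx) : Cx := mkC (Re a + Re b) (Im a + Im b).
Definition Copp (a : Cx) : Cx := mkC (- Re a) (- Im a).
Definition Csub (a b : Cx) : Cx := Cadd a (Copp b).
Definition Cmul (a b : Cx) : Cx :=
  mkC (Re a * Re b - Im a * Im b) (Re a * Im b + Im a * Re b).
Definition Cnorm2 (a : Cx) : R := Re a * Re a + Im a * Im a.
Definition Cnorm (a : Cx) : R := sqrt (Cnorm2 a).
(* multiplicative inverse (junk value C0 at 0) *)
Definition Cinv (a : Cx) : Cx := mkC (Re a / Cnorm2 a) (- Im a / Cnorm2 a).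
Definition Cdiv (a b : Cx) : Cx := Cmul a (Cinv b).
Definition RtoC (x : R) : Cx := mkC x 0.
Definition Cexpi (t : R) : Cx := mkC (cos t) (sin t).

Fixpoint Cpow (a : Cx) (n : nat) : Cx :=
  match n with O => C1 | S m => Cmul a (Cpow a m) end.

Fixpoint Csum (n : nat) (f : nat -> Cx) : Cx :=
  match n with O => C0 | S m => Cadd (Csum m f) (f m) end.
Fixpoint Cprod (n : nat) (f : nat -> Cx) : Cx :=
  match n with O => C1 | S m => Cmul (Cprod m f) (f m) end.
Fixpoint Rsum (n : nat) (f : nat -> R) : R :=
  match n with O => 0 | S m => Rsum m f + f m end.

(* k x k complex matrices are functions nat -> nat -> Cx; only the entries
   with indices < k matter. *)
Definition mat := nat -> nat -> Cx.

Definition delta (i j : nat) : Cx := if Nat.eqb i j then C1 else C0.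

Definition frob (k : nat) (M : mat) : R :=
  sqrt (Rsum k (fun i => Rsum k (fun j => Cnorm2 (M i j)))).

Definition sub_id (A : mat) : mat := fun i j => Csub (A i j) (delta i j).

Definition minor0 (A : mat) (j : nat) : mat :=
  fun r c => A (S r) (if Nat.ltb c j then c else S c).

Fixpoint det (n : nat) (A : mat) : Cx :=
  match n with
  | O => C1
  | S m => Csum (S m) (fun j =>
             Cmul (Cmul (Cpow (Copp C1) j) (A 0%nat j)) (det m (minor0 A j)))
  end.

Definition mulv (k : nat) (A : mat) (z : nat -> Cx) (i : nat) : Cx :=
  Csum k (fun l => Cmul (A i l) (z l)).

Definition CInt (f : R -> Cx) (a b : R) (v : Cx) : Prop :=
  (exists pr : Riemann_integrable (fun t => Re (f t)) a b, RiemannInt pr = Re v) /\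
  (exists pr : Riemann_integrable (fun t => Im (f t)) a b, RiemannInt pr = Im v).

(* Iterated integral over [0,2pi]^n of F : (nat -> R) -> Cx, in the variables
   t_0, ..., t_{n-1}; t_{n-1} is the outermost variable and t_0 the innermost. *)
Fixpoint IterInt (n : nat) (F : (nat -> R) -> Cx) (v : Cx) : Prop :=
  match n with
  | O => v = F (fun _ => 0)
  | S m => exists g : R -> Cx,
      CInt g 0 (2 * PI) v /\
      forall s, 0 <= s <= 2 * PI ->
        IterInt m (fun t => F (fun j => if Nat.eqb j m then s else t j)) (g s)
  end.

(* Iterated contour integral over the torus (partial D)^k of f(z_0,...,z_{k-1})
   dz_0 ... dz_{k-1}, with each z_j = e^{i t_j}, dz_j = i e^{i t_j} dt_j,
   t_j in [0, 2 pi] (unit circle traversed once counterclockwise). *)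
Definition TorusInt (k : nat) (f : (nat -> Cx) -> Cx) (v : Cx) : Prop :=
  IterInt k (fun t => Cmul (f (fun j => Cexpi (t j)))
                           (Cprod k (fun j => Cmul Ci (Cexpi (t j))))) v.

(* The bound ||A - 1|| < 1/k makes A strictly diagonally dominant by rows
   (Cauchy-Schwarz on each row of A - 1), so on the torus every w_i is
   dominated by its diagonal term and cannot vanish.  Integrate in z_0 first:
   w_0 = A_00 z_0 + c_0 has its zero inside the unit disc, whereas each other
   w_i = A_i0 z_0 + c_i has |A_i0| < |c_i|.  By the residue theorem the z_0
   integral is 2 pi i / A_00 times the same integrand for the Schur complement
   of A_00, evaluated at z_0 = -c_0 / A_00.  The Schur complement is again
   diagonally dominant and det A = A_00 det (Schur A), so induction on k gives
   the formula.  The one-variable contour integrals are obtained by uniform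
   approximation on the circle by polynomials (truncated geometric series),
   whose integrals reduce to the orthogonality of the e^{ins}. *)

From Stdlib Require Import Reals Lra Field Lia FunctionalExtensionality.
From Coquelicot Require Import Hierarchy Continuity AutoDerive RInt RInt_analysis.
From Pilot Require Import Defs.
Open Scope R_scope.

(** * Complex numbers *)

Lemma Cx_ext (a b : Cx) : Re a = Re b -> Im a = Im b -> a = b.
Proof. destruct a, b; simpl; intros; subst; reflexivity. Qed.

Lemma Cnorm2_ge0 a : 0 <= Cnorm2 a.
Proof. unfold Cnorm2; nra. Qed.

Lemma Cnorm2_eq0 (a : Cx) : Cnorm2 a = 0 -> a = C0.
Proof. unfold Cnorm2; intro H; apply Cx_ext; simpl; nra. Qed.

Lemma C1_neq_C0 : C1 <> C0.
Proof. intro E; assert (E1 := f_equal Re E); simpl in E1; lra. Qed.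

Lemma Cx_field_theory : field_theory C0 C1 Cadd Cmul Csub Copp Cdiv Cinv (@eq Cx).
Proof.
  constructor; [constructor| |reflexivity|]; intros; try (apply Cx_ext; simpl; ring).
  - exact C1_neq_C0.
  - assert (Hn : Cnorm2 p <> 0) by (intro E; apply H, Cnorm2_eq0, E).
    unfold Cnorm2 in Hn; apply Cx_ext; simpl; unfold Cnorm2; field; exact Hn.
Qed.

Add Field Cx_field : Cx_field_theory.

Lemma Cnorm_ge0 a : 0 <= Cnorm a.
Proof. apply sqrt_pos. Qed.

Lemma Cnorm_sq a : Cnorm a * Cnorm a = Cnorm2 a.
Proof. apply sqrt_sqrt, Cnorm2_ge0. Qed.

Lemma Cnorm_mul a b : Cnorm (Cmul a b) = Cnorm a * Cnorm b.
Proof.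
  unfold Cnorm; rewrite <- sqrt_mult by apply Cnorm2_ge0.
  f_equal; unfold Cnorm2; simpl; ring.
Qed.

Lemma Cnorm_opp a : Cnorm (Copp a) = Cnorm a.
Proof. unfold Cnorm, Cnorm2; simpl; f_equal; ring. Qed.

Lemma Cnorm_C0 : Cnorm C0 = 0.
Proof. unfold Cnorm, Cnorm2; simpl; rewrite Rmult_0_l, Rplus_0_l; apply sqrt_0. Qed.

Lemma Cnorm_C1 : Cnorm C1 = 1.
Proof. unfold Cnorm, Cnorm2; simpl; rewrite Rmult_1_l, Rmult_0_l, Rplus_0_r; apply sqrt_1. Qed.

Lemma Cnorm_expi t : Cnorm (Cexpi t) = 1.
Proof.
  unfold Cnorm, Cnorm2; simpl.
  replace (cos t * cos t + sin t * sin t) with 1 by (rewrite <- (sin2_cos2 t); unfold Rsqr; ring).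
  apply sqrt_1.
Qed.

Lemma Cnorm_triang a b : Cnorm (Cadd a b) <= Cnorm a + Cnorm b.
Proof.
  assert (Pa := Cnorm_ge0 a); assert (Pb := Cnorm_ge0 b).
  assert (Ha := Cnorm_sq a); assert (Hb := Cnorm_sq b); assert (Hab := Cnorm_sq (Cadd a b)).
  assert (CS : Re a * Re b + Im a * Im b <= Cnorm a * Cnorm b).
  { apply Rsqr_incr_0_var; [|apply Rmult_le_pos; auto].
    unfold Rsqr; replace (Cnorm a * Cnorm b * (Cnorm a * Cnorm b))
      with (Cnorm a * Cnorm a * (Cnorm b * Cnorm b)) by ring.
    rewrite Ha, Hb; unfold Cnorm2.
    assert (Q := Rle_0_sqr (Re a * Im b - Im a * Re b)); unfold Rsqr in Q; nra. }
  apply Rsqr_incr_0_var; [|lra]. unfold Rsqr.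
  rewrite Hab; unfold Cnorm2 in *; simpl; nra.
Qed.

Lemma Cnorm_sub a b : Cnorm (Csub a b) <= Cnorm a + Cnorm b.
Proof. unfold Csub; rewrite <- (Cnorm_opp b); apply Cnorm_triang. Qed.

Lemma Cnorm_reverse_triang a b : Cnorm a - Cnorm b <= Cnorm (Cadd a b).
Proof.
  assert (H := Cnorm_triang (Cadd a b) (Copp b)).
  replace (Cadd (Cadd a b) (Copp b)) with a in H by field.
  rewrite Cnorm_opp in H; lra.
Qed.

Lemma Cnorm_eq0 a : Cnorm a = 0 -> a = C0.
Proof. intro H; apply Cnorm2_eq0; rewrite <- Cnorm_sq, H; ring. Qed.

Lemma Cnorm_gt0 a : a <> C0 -> 0 < Cnorm a.
Proof.
  intro H; destruct (Cnorm_ge0 a) as [H1|H1]; auto.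
  exfalso; apply H, Cnorm_eq0; auto.
Qed.

Lemma Cnorm_gt0_neq0 a : 0 < Cnorm a -> a <> C0.
Proof. intros H E; subst; rewrite Cnorm_C0 in H; lra. Qed.

Lemma Cnorm_inv a : a <> C0 -> Cnorm (Cinv a) = / Cnorm a.
Proof.
  intro H; assert (P := Cnorm_gt0 a H).
  assert (E : Cnorm (Cinv a) * Cnorm a = 1).
  { rewrite <- Cnorm_mul, <- Cnorm_C1; f_equal; field; auto. }
  apply (Rmult_eq_reg_r (Cnorm a)); [rewrite E; field|]; lra.
Qed.

Lemma Cnorm_div a b : b <> C0 -> Cnorm (Cdiv a b) = Cnorm a / Cnorm b.
Proof. intro H; unfold Cdiv, Rdiv; rewrite Cnorm_mul, Cnorm_inv; auto. Qed.

Lemma Cnorm_pow a n : Cnorm (Cpow a n) = Cnorm a ^ n.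
Proof. induction n; simpl; [apply Cnorm_C1|rewrite Cnorm_mul, IHn; ring]. Qed.

Lemma Re_le_Cnorm a : Rabs (Re a) <= Cnorm a.
Proof.
  assert (H := Cnorm_sq a); assert (P := Cnorm_ge0 a); unfold Cnorm2 in H.
  apply Rabs_le; split; nra.
Qed.

Lemma Im_le_Cnorm a : Rabs (Im a) <= Cnorm a.
Proof.
  assert (H := Cnorm_sq a); assert (P := Cnorm_ge0 a); unfold Cnorm2 in H.
  apply Rabs_le; split; nra.
Qed.

Lemma Cmul_neq0 a b : a <> C0 -> b <> C0 -> Cmul a b <> C0.
Proof.
  intros Ha Hb; apply Cnorm_gt0_neq0; rewrite Cnorm_mul.
  apply Rmult_lt_0_compat; apply Cnorm_gt0; auto.
Qed.

Lemma Cpow_neq0 a n : a <> C0 -> Cpow a n <> C0.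
Proof. intro H; induction n; simpl; [exact C1_neq_C0|apply Cmul_neq0; auto]. Qed.

Lemma Cinv_mul a b : Cinv (Cmul a b) = Cmul (Cinv a) (Cinv b).
Proof.
  destruct (Req_dec (Cnorm2 a) 0) as [Ha|Ha];
    [apply Cnorm2_eq0 in Ha; subst; apply Cx_ext; simpl; unfold Cnorm2, Rdiv; simpl; ring|].
  destruct (Req_dec (Cnorm2 b) 0) as [Hb|Hb];
    [apply Cnorm2_eq0 in Hb; subst; apply Cx_ext; simpl; unfold Cnorm2, Rdiv; simpl; ring|].
  field; split; intro E; subst; unfold Cnorm2 in *; simpl in *; lra.
Qed.

Definition affine (a c z : Cx) : Cx := Cadd (Cmul a z) c.

Lemma Cnorm_affine_ge_const a c z : Cnorm z = 1 -> Cnorm c - Cnorm a <= Cnorm (affine a c z).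
Proof.
  intro Hz; assert (H := Cnorm_reverse_triang c (Cmul a z)).
  rewrite Cnorm_mul, Hz, Rmult_1_r in H.
  unfold affine; replace (Cadd (Cmul a z) c) with (Cadd c (Cmul a z)) by field; exact H.
Qed.

Lemma Cnorm_affine_ge_slope a c z : Cnorm z = 1 -> Cnorm a - Cnorm c <= Cnorm (affine a c z).
Proof.
  intro Hz; assert (H := Cnorm_reverse_triang (Cmul a z) c).
  rewrite Cnorm_mul, Hz, Rmult_1_r in H; exact H.
Qed.

Lemma affine_neq0_on_circle a c z : Cnorm a <> Cnorm c -> Cnorm z = 1 -> affine a c z <> C0.
Proof.
  intros Hac Hz; apply Cnorm_gt0_neq0.
  assert (H1 := Cnorm_affine_ge_const a c z Hz); assert (H2 := Cnorm_affine_ge_slope a c z Hz).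
  lra.
Qed.

(** * Finite sums and products *)

Lemma Csum_ext n f g : (forall i, (i < n)%nat -> f i = g i) -> Csum n f = Csum n g.
Proof. induction n; intro H; simpl; auto. rewrite IHn, H; auto. Qed.

Lemma Cprod_ext n f g : (forall i, (i < n)%nat -> f i = g i) -> Cprod n f = Cprod n g.
Proof. induction n; intro H; simpl; auto. rewrite IHn, H; auto. Qed.

Lemma Rsum_ext n f g : (forall i, (i < n)%nat -> f i = g i) -> Rsum n f = Rsum n g.
Proof. induction n; intro H; simpl; auto. rewrite IHn, H; auto. Qed.

Lemma Csum_shift n f : Csum (S n) f = Cadd (f O) (Csum n (fun i => f (S i))).
Proof.
  induction n; [simpl; field|].
  change (Csum (S (S n)) f) with (Cadd (Csum (S n) f) (f (S n))).
  rewrite IHn; simpl; field.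
Qed.

Lemma Cprod_shift n f : Cprod (S n) f = Cmul (f O) (Cprod n (fun i => f (S i))).
Proof.
  induction n; [simpl; field|].
  change (Cprod (S (S n)) f) with (Cmul (Cprod (S n) f) (f (S n))).
  rewrite IHn; simpl; field.
Qed.

Lemma Rsum_shift n f : Rsum (S n) f = f O + Rsum n (fun i => f (S i)).
Proof.
  induction n; [simpl; ring|].
  change (Rsum (S (S n)) f) with (Rsum (S n) f + f (S n)).
  rewrite IHn; simpl; ring.
Qed.

Lemma Rsum_le n f g : (forall i, (i < n)%nat -> f i <= g i) -> Rsum n f <= Rsum n g.
Proof.
  induction n; intro H; simpl; [lra|].
  assert (Rsum n f <= Rsum n g) by (apply IHn; auto).
  assert (f n <= g n) by (apply H; lia); lra.
Qed.

Lemma Rsum_ge0 n f : (forall i, (i < n)%nat -> 0 <= f i) -> 0 <= Rsum n f.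
Proof.
  induction n; intro H; simpl; [lra|].
  assert (0 <= Rsum n f) by auto.
  assert (0 <= f n) by (apply H; lia); lra.
Qed.

Lemma Rsum_scal n c f : Rsum n (fun i => c * f i) = c * Rsum n f.
Proof. induction n; simpl; [ring|]. rewrite IHn; ring. Qed.

Lemma Rsum_add n f g : Rsum n (fun i => f i + g i) = Rsum n f + Rsum n g.
Proof. induction n; simpl; [ring|]. rewrite IHn; ring. Qed.

Lemma Csum_add n f g : Csum n (fun i => Cadd (f i) (g i)) = Cadd (Csum n f) (Csum n g).
Proof. induction n; simpl; [field|]. rewrite IHn; field. Qed.

Lemma Csum_scal n c f : Csum n (fun i => Cmul c (f i)) = Cmul c (Csum n f).
Proof. induction n; simpl; [field|]. rewrite IHn; field. Qed.

Lemma Rsum_extract n f i : (i < n)%nat ->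
  Rsum n f = f i + Rsum n (fun l => if Nat.eqb l i then 0 else f l).
Proof.
  induction n; intro H; [lia|]; simpl.
  destruct (Nat.eqb_spec n i) as [->|Hne].
  - rewrite (Rsum_ext i (fun l => if Nat.eqb l i then 0 else f l) f); [ring|].
    intros l Hl; destruct (Nat.eqb_spec l i); [lia|auto].
  - rewrite IHn by lia; ring.
Qed.

Lemma Csum_extract n f i : (i < n)%nat ->
  Csum n f = Cadd (f i) (Csum n (fun l => if Nat.eqb l i then C0 else f l)).
Proof.
  induction n; intro H; [lia|]; simpl.
  destruct (Nat.eqb_spec n i) as [->|Hne].
  - rewrite (Csum_ext i (fun l => if Nat.eqb l i then C0 else f l) f); [field|].
    intros l Hl; destruct (Nat.eqb_spec l i); [lia|auto].
  - rewrite IHn by lia; field.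
Qed.

Lemma Cnorm_Csum n f : Cnorm (Csum n f) <= Rsum n (fun i => Cnorm (f i)).
Proof.
  induction n; simpl; [rewrite Cnorm_C0; lra|].
  eapply Rle_trans; [apply Cnorm_triang|]; lra.
Qed.

Lemma Cprod_neq0 n f : (forall i, (i < n)%nat -> f i <> C0) -> Cprod n f <> C0.
Proof. induction n; intro H; simpl; [exact C1_neq_C0|apply Cmul_neq0; auto]. Qed.

Lemma Cinv_prod n f : Cinv (Cprod n f) = Cprod n (fun i => Cinv (f i)).
Proof.
  induction n; simpl; [apply Cx_ext; simpl; unfold Cnorm2; simpl; field|].
  rewrite Cinv_mul, IHn; auto.
Qed.

Lemma Rsum_sq_le n f : Rsum n f * Rsum n f <= INR n * Rsum n (fun l => f l * f l).
Proof.
  induction n; [simpl; lra|].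
  change (Rsum (S n) f) with (Rsum n f + f n).
  change (Rsum (S n) (fun l => f l * f l)) with (Rsum n (fun l => f l * f l) + f n * f n).
  rewrite S_INR.
  set (S0 := Rsum n f) in *; set (Q := Rsum n (fun l => f l * f l)) in *.
  destruct (Nat.eq_dec n 0) as [->|Hn]; [unfold S0, Q; simpl; nra|].
  assert (Pn : 0 < INR n) by (apply lt_0_INR; lia).
  assert (K : 2 * S0 * f n <= Q + INR n * (f n * f n)).
  { apply (Rmult_le_reg_l (INR n)); auto.
    assert (Sq := Rle_0_sqr (S0 - INR n * f n)); unfold Rsqr in Sq; nra. }
  nra.
Qed.

(** * Determinants and Schur complements *)

Definition schur (A : mat) : mat := fun i l =>
  Csub (A (S i) (S l)) (Cmul (A (S i) O) (Cdiv (A O (S l)) (A O O))).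

(* [det] is identified with MathComp's [\det], whose multiplicativity gives
   the Schur factorisation, after equipping [Cx] with its field structure. *)
Module CxMatrix.
From HB Require Import structures.
From mathcomp Require Import all_boot all_algebra Rstruct.
Import GRing.Theory.

Definition c2p (x : Cx) : R * R := (Re x, Im x).
Definition p2c (p : R * R) : Cx := mkC p.1 p.2.
Lemma c2pK : cancel c2p p2c. Proof. by case. Qed.
HB.instance Definition _ := Choice.copy Cx (can_type c2pK).

Lemma CaddA : associative Cadd. Proof. by move=> *; field. Qed.
Lemma CaddC : commutative Cadd. Proof. by move=> *; field. Qed.
Lemma Cadd0 : left_id C0 Cadd. Proof. by move=> *; field. Qed.
Lemma CaddN : left_inverse C0 Copp Cadd. Proof. by move=> *; field. Qed.
HB.instance Definition _ := GRing.isZmodule.Build Cx CaddA CaddC Cadd0 CaddN.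

Lemma CmulA : associative Cmul. Proof. by move=> *; field. Qed.
Lemma CmulC : commutative Cmul. Proof. by move=> *; field. Qed.
Lemma Cmul1 : left_id Defs.C1 Cmul. Proof. by move=> *; field. Qed.
Lemma CmulDl : left_distributive Cmul Cadd. Proof. by move=> *; field. Qed.
Lemma C1_neq0 : Defs.C1 != C0. Proof. exact/eqP/C1_neq_C0. Qed.
HB.instance Definition _ :=
  GRing.Zmodule_isComNzRing.Build Cx CmulA CmulC Cmul1 CmulDl C1_neq0.

Lemma CmulV (x : Cx) : x != 0%R -> Cmul (Cinv x) x = Defs.C1.
Proof. by move/eqP=> H; field. Qed.
Lemma Cinv0 : Cinv 0%R = 0%R.
Proof. by apply: Cx_ext => /=; rewrite /Rdiv; ring. Qed.
HB.instance Definition _ := GRing.ComNzRing_isField.Build Cx CmulV Cinv0.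

Local Open Scope ring_scope.

Definition mx n (A : mat) : 'M[Cx]_n := \matrix_(i < n, j < n) A i j.

Lemma Csum_big n (f : nat -> Cx) : Csum n f = \sum_(j < n) f j.
Proof. by elim: n => [|n IH]; rewrite ?big_ord0 // big_ord_recr /= IH. Qed.

Lemma CmulE (a b : Cx) : Cmul a b = a * b. Proof. by []. Qed.

Lemma Cpow_exp (a : Cx) j : Cpow a j = a ^+ j.
Proof. by elim: j => [|j IH] //=; rewrite exprS IH. Qed.

Lemma ltbE a b : Nat.ltb a b = (a < b)%N.
Proof. by case: (ltnP a b) => H; [exact/Nat.ltb_lt/ltP | exact/Nat.ltb_ge/leP]. Qed.

Lemma minor0_mx n A j : row' ord0 (col' j (mx n.+1 A)) = mx n (minor0 A j).
Proof.
apply/matrixP => r c; rewrite !mxE /minor0 /=; congr (A _ _).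
by rewrite /bump ltbE; case: (ltnP c j).
Qed.

Lemma detE n A : det n A = \det (mx n A).
Proof.
elim: n A => [|n IH] A; first by rewrite det_mx00.
transitivity (Csum n.+1 (fun j =>
  Cmul (Cmul (Cpow (Copp Defs.C1) j) (A 0%N j)) (det n (minor0 A j)))); first by [].
rewrite Csum_big (expand_det_row _ ord0); apply: eq_bigr => j _.
rewrite /cofactor minor0_mx IH !mxE Cpow_exp add0n.
have -> : Copp Defs.C1 = -1 by [].
by rewrite !CmulE -mulrA mulrCA.
Qed.

(* Column operations clearing row 0 outside the pivot: right multiplication
   by a unitriangular matrix, which leaves the determinant unchanged. *)
Lemma det_schur n (A : mat) : A O O <> C0 -> det n.+1 A = Cmul (A O O) (det n (schur A)).
Proof.
move=> H0; rewrite !detE CmulE.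
set M := mx n.+1 A.
pose N : 'M[Cx]_(n.+1) :=
  \matrix_(i, j) (if (i == ord0) && (j != ord0) then - (M ord0 j / M ord0 ord0) else 0).
have detN : \det (1%:M + N) = 1.
  rewrite -det_tr det_trig; last first.
    apply/is_trig_mxP => i j ij; rewrite !mxE.
    have jn0 : j != ord0 by rewrite -(inj_eq val_inj) /= -lt0n (leq_ltn_trans _ ij).
    have ji : j != i by rewrite neq_ltn ij orbT.
    by rewrite (negbTE jn0) (negbTE ji) /= addr0.
  by apply: big1 => i _; rewrite !mxE eqxx; case: (i == ord0); rewrite /= ?andbF addr0.
have entry i j : (M *m (1%:M + N)) i j =
    M i j + M i ord0 * (if j != ord0 then - (M ord0 j / M ord0 ord0) else 0).
  rewrite mulmxDr mulmx1 !mxE; congr (_ + _).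
  rewrite (bigD1 ord0) //= big1 ?addr0; last by move=> l ln0; rewrite !mxE (negbTE ln0) /= mulr0.
  by rewrite !mxE eqxx.
have M00 : M ord0 ord0 != 0 by rewrite mxE; apply/eqP.
rewrite -(mulr1 (\det M)) -detN -det_mulmx (expand_det_row _ ord0) (bigD1 ord0) //=.
rewrite big1 ?addr0; last first.
  by move=> j jn0; rewrite entry jn0 mulrN [M ord0 ord0 * _]mulrCA divff // mulr1 subrr mul0r.
rewrite entry eqxx /= mulr0 addr0 /cofactor /= expr0 mul1r {1}/M mxE.
congr (_ * \det _); apply/matrixP => r c.
by rewrite [in LHS]mxE [in LHS]mxE entry /= /schur /M !mxE /= mulrN.
Qed.
End CxMatrix.

(** * Integrals over [0, 2 PI] *)

Definition is_CInt2PI (f : R -> Cx) (v : Cx) : Prop :=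
  is_RInt (fun s => Re (f s)) 0 (2 * PI) (Re v) /\ is_RInt (fun s => Im (f s)) 0 (2 * PI) (Im v).

Lemma is_RInt_Riemann (f : R -> R) a b v : is_RInt f a b v ->
  exists pr : Riemann_integrable f a b, RiemannInt pr = v.
Proof.
  intro H; assert (E : ex_RInt f a b) by (exists v; auto).
  exists (ex_RInt_Reals_0 _ _ _ E); rewrite <- RInt_Reals; apply is_RInt_unique; auto.
Qed.

Lemma Riemann_is_RInt (f : R -> R) a b v :
  (exists pr : Riemann_integrable f a b, RiemannInt pr = v) -> is_RInt f a b v.
Proof.
  intros [pr H]; rewrite <- H, <- (RInt_Reals f a b pr).
  exact (@RInt_correct R_CompleteNormedModule f a b (ex_RInt_Reals_1 _ _ _ pr)).
Qed.

Lemma is_CInt2PI_CInt f v : is_CInt2PI f v <-> CInt f 0 (2 * PI) v.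
Proof.
  split; intros [H1 H2]; split;
    (apply is_RInt_Riemann || apply Riemann_is_RInt); auto.
Qed.

Lemma is_CInt2PI_eq {f g : R -> Cx} {v w : Cx} :
  is_CInt2PI f v -> (forall s, f s = g s) -> v = w -> is_CInt2PI g w.
Proof.
  intros [H1 H2] E <-; split; (eapply is_RInt_ext; [|eassumption]); intros; simpl; rewrite E; auto.
Qed.

Lemma is_CInt2PI_add f g v w :
  is_CInt2PI f v -> is_CInt2PI g w -> is_CInt2PI (fun s => Cadd (f s) (g s)) (Cadd v w).
Proof.
  intros [H1 H2] [H3 H4]; split;
    [apply (is_RInt_plus _ _ _ _ _ _ H1 H3)|apply (is_RInt_plus _ _ _ _ _ _ H2 H4)].
Qed.

Lemma is_CInt2PI_scal c f v : is_CInt2PI f v -> is_CInt2PI (fun s => Cmul c (f s)) (Cmul c v).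
Proof.
  intros [H1 H2]; split; simpl.
  - apply (is_RInt_minus _ _ _ _ _ _ (is_RInt_scal _ _ _ (Re c) _ H1) (is_RInt_scal _ _ _ (Im c) _ H2)).
  - apply (is_RInt_plus _ _ _ _ _ _ (is_RInt_scal _ _ _ (Re c) _ H2) (is_RInt_scal _ _ _ (Im c) _ H1)).
Qed.

Lemma is_CInt2PI_sub f g v w :
  is_CInt2PI f v -> is_CInt2PI g w -> is_CInt2PI (fun s => Csub (f s) (g s)) (Csub v w).
Proof.
  intros H1 H2; apply is_CInt2PI_add; auto.
  apply (is_CInt2PI_eq (is_CInt2PI_scal (Copp C1) _ _ H2)); intros; field.
Qed.

Lemma is_CInt2PI_const c : is_CInt2PI (fun _ => c) (Cmul (RtoC (2 * PI)) c).
Proof.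
  split; simpl;
    [replace (2 * PI * Re c - 0 * Im c) with (scal (2 * PI - 0) (Re c))
    |replace (2 * PI * Im c + 0 * Re c) with (scal (2 * PI - 0) (Im c))];
    try apply (@is_RInt_const R_NormedModule);
    unfold scal; simpl; unfold mult; simpl; ring.
Qed.

Definition Ccont (f : R -> Cx) : Prop :=
  forall s, continuity_pt (fun s => Re (f s)) s /\ continuity_pt (fun s => Im (f s)) s.

Lemma Ccont_const c : Ccont (fun _ => c).
Proof. intro s; split; apply continuity_pt_const; intros x y; auto. Qed.

Lemma Ccont_add f g : Ccont f -> Ccont g -> Ccont (fun s => Cadd (f s) (g s)).
Proof. intros Hf Hg s; destruct (Hf s), (Hg s); split; apply continuity_pt_plus; auto. Qed.

Lemma Ccont_mul f g : Ccont f -> Ccont g -> Ccont (fun s => Cmul (f s) (g s)).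
Proof.
  intros Hf Hg s; destruct (Hf s), (Hg s); split;
    [apply continuity_pt_minus|apply continuity_pt_plus]; apply continuity_pt_mult; auto.
Qed.

Lemma Ccont_inv f : Ccont f -> (forall s, f s <> C0) -> Ccont (fun s => Cinv (f s)).
Proof.
  intros Hf Hn s; destruct (Hf s) as [H1 H2].
  assert (N : continuity_pt (fun s => Cnorm2 (f s)) s)
    by (unfold Cnorm2; apply continuity_pt_plus; apply continuity_pt_mult; auto).
  assert (Nz : Cnorm2 (f s) <> 0) by (intro E; apply (Hn s), Cnorm2_eq0, E).
  split; simpl; apply continuity_pt_div; auto; apply continuity_pt_opp; auto.
Qed.

Lemma Ccont_expi_scal m : Ccont (fun s => Cexpi (m * s)).
Proof.
  assert (Hl : forall s, continuity_pt (fun s => m * s) s).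
  { intro s; apply continuity_pt_mult; [apply continuity_pt_const; intros x y; auto|apply continuity_pt_id]. }
  intro s; split; apply (continuity_pt_comp (fun s => m * s)); auto;
    [apply continuity_cos|apply continuity_sin].
Qed.

Lemma Ccont_expi : Ccont Cexpi.
Proof. intro s; split; [exact (continuity_cos s)|exact (continuity_sin s)]. Qed.

Lemma Ccont_prod n (f : nat -> R -> Cx) : (forall i, (i < n)%nat -> Ccont (f i)) ->
  Ccont (fun s => Cprod n (fun i => f i s)).
Proof.
  induction n; intro H; simpl; [apply Ccont_const|].
  apply Ccont_mul; [apply IHn|apply H]; auto.
Qed.

Lemma Ccont_affine_expi a c : Ccont (fun s => affine a c (Cexpi s)).
Proof. apply Ccont_add; [apply Ccont_mul; [apply Ccont_const|apply Ccont_expi]|apply Ccont_const]. Qed.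

Lemma is_RInt_of_uniform_approx (f : R -> R) v : (forall s, continuity_pt f s) ->
  (forall eps, 0 < eps -> exists g, is_RInt g 0 (2 * PI) v /\
       forall s, 0 <= s <= 2 * PI -> Rabs (f s - g s) <= eps) ->
  is_RInt f 0 (2 * PI) v.
Proof.
  intros Hc Ha.
  assert (Ex : ex_RInt f 0 (2 * PI)).
  { apply (@ex_RInt_continuous R_CompleteNormedModule); intros z _; apply continuity_pt_filterlim; auto. }
  assert (Hi := @RInt_correct R_CompleteNormedModule _ _ _ Ex).
  set (I := RInt f 0 (2 * PI)) in *.
  assert (B : forall eps, 0 < eps -> Rabs (I - v) <= 2 * PI * eps).
  { intros eps He; destruct (Ha eps He) as [g [Hg Hb]].
    assert (N := @norm_RInt_le_const R_NormedModule (fun y => minus (f y) (g y)) 0 (2 * PI)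
      (minus I v) eps (Rlt_le _ _ (Rmult_lt_0_compat 2 PI ltac:(lra) PI_RGT_0))
      (fun x Hx => (Hb x Hx : norm (minus (f x) (g x)) <= eps)) (is_RInt_minus _ _ _ _ _ _ Hi Hg)).
    change (Rabs (I - v) <= (2 * PI - 0) * eps) in N; lra. }
  replace v with I; auto.
  destruct (Req_dec (I - v) 0) as [E|E]; [lra|exfalso].
  assert (P := Rabs_pos_lt _ E); assert (Ppi := PI_RGT_0).
  assert (B1 := B (Rabs (I - v) / (4 * PI)) ltac:(apply Rdiv_lt_0_compat; lra)).
  replace (2 * PI * (Rabs (I - v) / (4 * PI))) with (Rabs (I - v) / 2) in B1 by (field; lra).
  lra.
Qed.

Lemma is_CInt2PI_of_uniform_approx f v : Ccont f ->
  (forall eps, 0 < eps -> exists g, is_CInt2PI g v /\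
       forall s, 0 <= s <= 2 * PI -> Cnorm (Csub (f s) (g s)) <= eps) ->
  is_CInt2PI f v.
Proof.
  intros Hc Ha; split; apply is_RInt_of_uniform_approx; try (intro s; apply (Hc s));
    intros eps He; destruct (Ha eps He) as [g [[Hre Him] Hb]].
  - exists (fun s => Re (g s)); split; [exact Hre|intros s Hs].
    eapply Rle_trans; [apply (Re_le_Cnorm (Csub (f s) (g s)))|apply Hb, Hs].
  - exists (fun s => Im (g s)); split; [exact Him|intros s Hs].
    eapply Rle_trans; [apply (Im_le_Cnorm (Csub (f s) (g s)))|apply Hb, Hs].
Qed.

(** * Contour integrals on the unit circle *)

Lemma Cexpi_add a b : Cmul (Cexpi a) (Cexpi b) = Cexpi (a + b).
Proof. apply Cx_ext; simpl; [rewrite cos_plus|rewrite sin_plus]; ring. Qed.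

Lemma Cexpi_0 : Cexpi 0 = C1.
Proof. apply Cx_ext; simpl; [apply cos_0|apply sin_0]. Qed.

Lemma Cexpi_opp s : Cexpi (- s) = Cinv (Cexpi s).
Proof.
  assert (Hnz : Cexpi s <> C0) by (apply Cnorm_gt0_neq0; rewrite Cnorm_expi; lra).
  assert (E := Cexpi_add s (- s)); rewrite Rplus_opp_r, Cexpi_0 in E.
  replace (Cexpi (- s)) with (Cmul (Cinv (Cexpi s)) (Cmul (Cexpi s) (Cexpi (- s)))) by (field; auto).
  rewrite E; field; auto.
Qed.

Lemma is_RInt_cos_scal m : m <> 0 -> sin (m * (2 * PI)) = 0 ->
  is_RInt (fun s => cos (m * s)) 0 (2 * PI) 0.
Proof.
  intros Hm Hs.
  replace 0 with (minus (sin (m * (2 * PI)) / m) (sin (m * 0) / m)) at 2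
    by (rewrite Hs, Rmult_0_r, sin_0; unfold minus, plus, opp; simpl; field; auto).
  apply (@is_RInt_derive R_CompleteNormedModule (fun s => sin (m * s) / m)); intros x _.
  - auto_derive; auto; field; auto.
  - apply continuity_pt_filterlim, (Ccont_expi_scal m x).
Qed.

Lemma is_RInt_sin_scal m : m <> 0 -> cos (m * (2 * PI)) = 1 ->
  is_RInt (fun s => sin (m * s)) 0 (2 * PI) 0.
Proof.
  intros Hm Hc.
  replace 0 with (minus (- cos (m * (2 * PI)) / m) (- cos (m * 0) / m)) at 2
    by (rewrite Hc, Rmult_0_r, cos_0; unfold minus, plus, opp; simpl; field; auto).
  apply (@is_RInt_derive R_CompleteNormedModule (fun s => - cos (m * s) / m)); intros x _.
  - auto_derive; auto; field; auto.
  - apply continuity_pt_filterlim, (Ccont_expi_scal m x).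
Qed.

Lemma is_CInt2PI_expi_nat sg n : sg = 1 \/ sg = -1 ->
  is_CInt2PI (fun s => Cexpi (sg * INR n * s)) (if Nat.eqb n 0 then RtoC (2 * PI) else C0).
Proof.
  intro Hsg; destruct (Nat.eqb_spec n 0) as [->|Hn].
  - apply (is_CInt2PI_eq (is_CInt2PI_const C1)).
    + intro s; simpl; rewrite Rmult_0_r, Rmult_0_l, Cexpi_0; auto.
    + apply Cx_ext; simpl; ring.
  - assert (Pn : 0 < INR n) by (apply lt_0_INR; lia).
    assert (Hm : sg * INR n <> 0) by (destruct Hsg; subst; nra).
    assert (Ang : sg * INR n * (2 * PI) = 0 + 2 * INR n * PI \/
                  sg * INR n * (2 * PI) = - (0 + 2 * INR n * PI))
      by (destruct Hsg; subst; [left|right]; ring).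
    split; simpl; [apply is_RInt_cos_scal|apply is_RInt_sin_scal]; auto;
      destruct Ang as [-> | ->]; rewrite ?sin_neg, ?cos_neg, ?sin_period, ?cos_period,
        ?sin_0, ?cos_0; ring.
Qed.

Inductive poly_fun : (Cx -> Cx) -> Prop :=
| poly_const c : poly_fun (fun _ => c)
| poly_mulX G : poly_fun G -> poly_fun (fun z => Cmul z (G z))
| poly_add G H : poly_fun G -> poly_fun H -> poly_fun (fun z => Cadd (G z) (H z))
| poly_ext G H : (forall z, G z = H z) -> poly_fun G -> poly_fun H.

Lemma poly_scal c G : poly_fun G -> poly_fun (fun z => Cmul c (G z)).
Proof.
  induction 1 as [c0|G _ IH|G H _ IH1 _ IH2|G H E _ IH].
  - apply poly_const.
  - eapply poly_ext; [|apply (poly_mulX _ IH)]; intro z; simpl; field.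
  - eapply poly_ext; [|apply (poly_add _ _ IH1 IH2)]; intro z; simpl; field.
  - eapply poly_ext; [|apply IH]; intro z; simpl; rewrite E; reflexivity.
Qed.

Lemma poly_mul G H : poly_fun G -> poly_fun H -> poly_fun (fun z => Cmul (G z) (H z)).
Proof.
  intros HG HH; induction HG as [c0|G _ IH|G H' _ IH1 _ IH2|G H' E _ IH].
  - apply poly_scal; auto.
  - eapply poly_ext; [|apply (poly_mulX _ IH)]; intro z; simpl; field.
  - eapply poly_ext; [|apply (poly_add _ _ IH1 IH2)]; intro z; simpl; field.
  - eapply poly_ext; [|apply IH]; intro z; simpl; rewrite E; reflexivity.
Qed.

Lemma poly_geometric_sum b N : poly_fun (fun z => Csum N (fun j => Cpow (Cmul b z) j)).
Proof.
  induction N; simpl; [apply poly_const|apply poly_add; auto].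
  clear IHN; induction N; simpl; [apply poly_const|].
  eapply poly_ext; [|apply (poly_mulX _ (poly_scal b _ IHN))]; intro z; simpl; field.
Qed.

Lemma is_CInt2PI_poly sg G n : sg = 1 \/ sg = -1 -> poly_fun G ->
  is_CInt2PI (fun s => Cmul (Cexpi (sg * INR n * s)) (G (Cexpi (sg * s))))
     (if Nat.eqb n 0 then Cmul (RtoC (2 * PI)) (G C0) else C0).
Proof.
  intros Hsg HG; revert n; induction HG as [c|G _ IH|G H _ IH1 _ IH2|G H E _ IH]; intro n.
  - apply (is_CInt2PI_eq (is_CInt2PI_scal c _ _ (is_CInt2PI_expi_nat sg n Hsg)));
      [intro s; field|destruct (Nat.eqb n 0); field].
  - apply (is_CInt2PI_eq (IH (S n))); [|simpl; destruct (Nat.eqb n 0); field].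
    intro s; rewrite S_INR.
    replace (sg * (INR n + 1) * s) with (sg * INR n * s + sg * s) by ring.
    rewrite <- Cexpi_add; field.
  - apply (is_CInt2PI_eq (is_CInt2PI_add _ _ _ _ (IH1 n) (IH2 n)));
      [intro s; field|destruct (Nat.eqb n 0); field].
  - apply (is_CInt2PI_eq (IH n)); [intro s|]; rewrite ?E; reflexivity.
Qed.

(* Polynomial approximation on the unit circle, exact at the origin: a
   substitute for holomorphy on the closed disc that suffices for Cauchy's
   theorem and formula on the circle. *)
Definition poly_approx_on_circle (f : Cx -> Cx) : Prop :=
  forall eps, 0 < eps -> exists G, poly_fun G /\ G C0 = f C0 /\
    forall z, Cnorm z = 1 -> Cnorm (Csub (f z) (G z)) <= eps.

Definition bounded_on_circle (f : Cx -> Cx) (M : R) : Prop :=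
  forall z, Cnorm z = 1 -> Cnorm (f z) <= M.

Lemma poly_approx_mul f1 f2 M1 M2 : 0 <= M1 -> 0 <= M2 ->
  bounded_on_circle f1 M1 -> bounded_on_circle f2 M2 ->
  poly_approx_on_circle f1 -> poly_approx_on_circle f2 ->
  poly_approx_on_circle (fun z => Cmul (f1 z) (f2 z)).
Proof.
  intros P1 P2 B1 B2 U1 U2 eps He.
  set (d := Rmin 1 (eps / (M1 + M2 + 1))).
  assert (Hd : 0 < d) by (apply Rmin_glb_lt; [lra|apply Rdiv_lt_0_compat; lra]).
  assert (Hd1 : d <= 1) by apply Rmin_l.
  assert (T : d * (M1 + M2 + 1) <= eps).
  { assert (Hd2 : d <= eps / (M1 + M2 + 1)) by apply Rmin_r.
    apply (Rmult_le_compat_r (M1 + M2 + 1)) in Hd2; [|lra].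
    replace (eps / (M1 + M2 + 1) * (M1 + M2 + 1)) with eps in Hd2 by (field; lra); exact Hd2. }
  destruct (U1 d Hd) as [G1 [HG1 [E1 A1]]]; destruct (U2 d Hd) as [G2 [HG2 [E2 A2]]].
  exists (fun z => Cmul (G1 z) (G2 z)); repeat split; [apply poly_mul; auto|rewrite E1, E2; auto|].
  intros z Hz.
  replace (Csub (Cmul (f1 z) (f2 z)) (Cmul (G1 z) (G2 z))) with
    (Cadd (Cmul (f1 z) (Csub (f2 z) (G2 z))) (Cmul (Csub (f1 z) (G1 z)) (G2 z))) by field.
  assert (BG2 : Cnorm (G2 z) <= M2 + d).
  { replace (G2 z) with (Csub (f2 z) (Csub (f2 z) (G2 z))) by field.
    eapply Rle_trans; [apply Cnorm_sub|]; assert (X := B2 z Hz); assert (Y := A2 z Hz); lra. }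
  eapply Rle_trans; [apply Cnorm_triang|]; rewrite !Cnorm_mul.
  assert (X1 := B1 z Hz); assert (X2 := A2 z Hz); assert (X3 := A1 z Hz).
  assert (Q1 : Cnorm (f1 z) * Cnorm (Csub (f2 z) (G2 z)) <= M1 * d)
    by (apply Rmult_le_compat; auto using Cnorm_ge0).
  assert (Q2 : Cnorm (Csub (f1 z) (G1 z)) * Cnorm (G2 z) <= d * (M2 + d))
    by (apply Rmult_le_compat; auto using Cnorm_ge0).
  nra.
Qed.

Lemma geometric_sum b N : Cmul (Csub C1 b) (Csum N (fun j => Cpow b j)) = Csub C1 (Cpow b N).
Proof.
  induction N; simpl; [field|].
  transitivity (Cadd (Cmul (Csub C1 b) (Csum N (fun j => Cpow b j))) (Cmul (Csub C1 b) (Cpow b N)));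
    [field|rewrite IHN; field].
Qed.

Lemma geometric_sum_0 N : Csum (S N) (fun j => Cpow C0 j) = C1.
Proof.
  induction N; [simpl; field|].
  change (Csum (S (S N)) (fun j => Cpow C0 j)) with (Cadd (Csum (S N) (fun j => Cpow C0 j)) (Cpow C0 (S N))).
  rewrite IHN; simpl; field.
Qed.

Lemma inv_affine_geometric_remainder a c z N : c <> C0 -> affine a c z <> C0 ->
  Csub (Cinv (affine a c z)) (Cmul (Cinv c) (Csum N (fun j => Cpow (Cmul (Copp (Cdiv a c)) z) j)))
  = Cdiv (Cpow (Cmul (Copp (Cdiv a c)) z) N) (affine a c z).
Proof.
  unfold affine; intros Hc Hl.
  set (q := Cmul (Copp (Cdiv a c)) z).
  set (S0 := Csum N (fun j => Cpow q j)).
  replace (Cpow q N) with (Csub C1 (Cmul (Csub C1 q) S0)) by (unfold S0; rewrite geometric_sum; field).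
  unfold q; field; auto.
Qed.

Lemma inv_affine_bounded a c : Cnorm a < Cnorm c ->
  bounded_on_circle (fun z => Cinv (affine a c z)) (/ (Cnorm c - Cnorm a)).
Proof.
  intros Hac z Hz; assert (H := Cnorm_affine_ge_const a c z Hz).
  assert (Pa := Cnorm_ge0 a).
  rewrite Cnorm_inv by (apply Cnorm_gt0_neq0; lra); apply Rinv_le_contravar; lra.
Qed.

(* Truncations of the geometric series of 1/(c (1 + (a/c) z)). *)
Lemma inv_affine_poly_approx a c : Cnorm a < Cnorm c ->
  poly_approx_on_circle (fun z => Cinv (affine a c z)).
Proof.
  intros Hac eps He.
  assert (Pa := Cnorm_ge0 a); assert (Hc : c <> C0) by (apply Cnorm_gt0_neq0; lra).
  set (r := Cnorm a / Cnorm c).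
  assert (Pr : 0 <= r) by (apply Rmult_le_pos; [lra|apply Rlt_le, Rinv_0_lt_compat; lra]).
  assert (Hr : Rabs r < 1).
  { rewrite Rabs_right by lra; unfold r; apply (Rmult_lt_reg_r (Cnorm c)); [lra|].
    field_simplify; lra. }
  destruct (pow_lt_1_zero r Hr (eps * (Cnorm c - Cnorm a)) ltac:(apply Rmult_lt_0_compat; lra))
    as [N HN].
  exists (fun z => Cmul (Cinv c) (Csum (S N) (fun j => Cpow (Cmul (Copp (Cdiv a c)) z) j))).
  repeat split.
  - apply poly_scal, poly_geometric_sum.
  - replace (Cmul (Copp (Cdiv a c)) C0) with C0 by (field; auto).
    rewrite geometric_sum_0; unfold affine; field; auto.
  - intros z Hz.
    assert (L := Cnorm_affine_ge_const a c z Hz).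
    assert (Hl : affine a c z <> C0) by (apply Cnorm_gt0_neq0; lra).
    rewrite inv_affine_geometric_remainder, Cnorm_div, Cnorm_pow, Cnorm_mul, Cnorm_opp,
      Cnorm_div, Hz by auto.
    replace (Cnorm a / Cnorm c * 1) with r by (unfold r; ring).
    assert (HN1 := HN (S N) ltac:(lia)); rewrite Rabs_right in HN1 by (apply Rle_ge, pow_le; lra).
    apply (Rmult_le_reg_r (Cnorm (affine a c z))); [lra|].
    replace (r ^ S N / Cnorm (affine a c z) * Cnorm (affine a c z)) with (r ^ S N) by (field; lra).
    assert (eps * (Cnorm c - Cnorm a) <= eps * Cnorm (affine a c z)) by (apply Rmult_le_compat_l; lra).
    lra.
Qed.

Lemma inv_affine_prod_poly_approx m (a c : nat -> Cx) :
  (forall i, (i < m)%nat -> Cnorm (a i) < Cnorm (c i)) ->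
  exists M, 0 <= M /\ bounded_on_circle (fun z => Cprod m (fun i => Cinv (affine (a i) (c i) z))) M /\
    poly_approx_on_circle (fun z => Cprod m (fun i => Cinv (affine (a i) (c i) z))).
Proof.
  induction m; intro H; simpl.
  - exists 1; repeat split; [lra|intros z _; rewrite Cnorm_C1; lra|].
    intros eps He; exists (fun _ => C1); repeat split; [apply poly_const|].
    intros z _; replace (Csub C1 C1) with C0 by field; rewrite Cnorm_C0; lra.
  - destruct IHm as [M [PM [BM UM]]]; [intros; apply H; lia|].
    assert (Hm := H m ltac:(lia)).
    assert (Pm : 0 <= / (Cnorm (c m) - Cnorm (a m))) by (apply Rlt_le, Rinv_0_lt_compat; lra).
    exists (M * / (Cnorm (c m) - Cnorm (a m))); repeat split.
    + apply Rmult_le_pos; auto.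
    + intros z Hz; rewrite Cnorm_mul.
      apply Rmult_le_compat; auto using Cnorm_ge0; apply inv_affine_bounded; auto.
    + apply (poly_approx_mul _ _ M _ PM Pm BM (inv_affine_bounded _ _ Hm) UM
               (inv_affine_poly_approx _ _ Hm)).
Qed.

(* Cauchy's theorem on the circle, written with dz = i e^{is} ds. *)
Lemma is_CInt2PI_poly_approx_mul_expi h : poly_approx_on_circle h ->
  Ccont (fun s => Cmul (Cexpi s) (h (Cexpi s))) ->
  is_CInt2PI (fun s => Cmul (Cexpi s) (h (Cexpi s))) C0.
Proof.
  intros U Hc; apply is_CInt2PI_of_uniform_approx; auto.
  intros eps He; destruct (U eps He) as [G [HG [_ HA]]].
  exists (fun s => Cmul (Cexpi s) (G (Cexpi s))); split.
  - apply (is_CInt2PI_eq (is_CInt2PI_poly 1 G 1 (or_introl eq_refl) HG)); [|reflexivity].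
    intro s; simpl; rewrite !Rmult_1_l; reflexivity.
  - intros s _.
    replace (Csub (Cmul (Cexpi s) (h (Cexpi s))) (Cmul (Cexpi s) (G (Cexpi s))))
      with (Cmul (Cexpi s) (Csub (h (Cexpi s)) (G (Cexpi s)))) by field.
    rewrite Cnorm_mul, Cnorm_expi, Rmult_1_l; apply HA, Cnorm_expi.
Qed.

(* Mean value property, traversing the circle clockwise. *)
Lemma is_CInt2PI_poly_approx_conj h : poly_approx_on_circle h ->
  Ccont (fun s => h (Cexpi (-1 * s))) ->
  is_CInt2PI (fun s => h (Cexpi (-1 * s))) (Cmul (RtoC (2 * PI)) (h C0)).
Proof.
  intros U Hc; apply is_CInt2PI_of_uniform_approx; auto.
  intros eps He; destruct (U eps He) as [G [HG [H0 HA]]].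
  exists (fun s => G (Cexpi (-1 * s))); split.
  - rewrite <- H0; apply (is_CInt2PI_eq (is_CInt2PI_poly (-1) G 0 (or_intror eq_refl) HG));
      [|reflexivity].
    intro s; simpl; rewrite Rmult_0_r, Rmult_0_l, Cexpi_0; field.
  - intros s _; apply HA, Cnorm_expi.
Qed.

Lemma is_CInt2PI_inv_prod_no_pole m (a c : nat -> Cx) :
  (forall i, (i < m)%nat -> Cnorm (a i) < Cnorm (c i)) ->
  is_CInt2PI (fun s => Cmul (Cinv (Cprod m (fun i => affine (a i) (c i) (Cexpi s)))) (Cmul Ci (Cexpi s)))
    C0.
Proof.
  intro H; destruct (inv_affine_prod_poly_approx m a c H) as [M [_ [_ U]]].
  pose (h := fun z => Cprod m (fun i => Cinv (affine (a i) (c i) z))).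
  assert (Hc : Ccont (fun s => Cmul (Cexpi s) (h (Cexpi s)))).
  { apply Ccont_mul; [apply Ccont_expi|].
    apply Ccont_prod; intros i Hi; apply Ccont_inv; [apply Ccont_affine_expi|].
    intro s; apply affine_neq0_on_circle; [specialize (H i Hi); lra|apply Cnorm_expi]. }
  apply (is_CInt2PI_eq (is_CInt2PI_scal Ci _ _ (is_CInt2PI_poly_approx_mul_expi h U Hc))).
  - intro s; unfold h; rewrite Cinv_prod; field.
  - field.
Qed.

(* Substituting e^{-is}, the pole of 1/(a z + c) inside the disc becomes the
   value at 0 of a function without poles. *)
Lemma is_CInt2PI_inv_affine_pole a c : Cnorm c < Cnorm a ->
  is_CInt2PI (fun s => Cmul (Cinv (affine a c (Cexpi s))) (Cmul Ci (Cexpi s)))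
    (Cmul (Cmul (RtoC (2 * PI)) Ci) (Cinv a)).
Proof.
  intro H; assert (Pc := Cnorm_ge0 c); assert (Ha : a <> C0) by (apply Cnorm_gt0_neq0; lra).
  assert (Hq : Cnorm (Cdiv c a) < Cnorm C1).
  { rewrite Cnorm_div, Cnorm_C1 by auto; apply (Rmult_lt_reg_r (Cnorm a)); [lra|].
    field_simplify; lra. }
  set (h := fun w => Cinv (affine (Cdiv c a) C1 w)).
  assert (Hnz : forall s, affine (Cdiv c a) C1 (Cexpi s) <> C0)
    by (intro s; apply affine_neq0_on_circle; [lra|apply Cnorm_expi]).
  assert (Hc : Ccont (fun s => h (Cexpi (-1 * s)))).
  { apply Ccont_inv; [|intro s; apply Hnz].
    apply Ccont_add; [apply Ccont_mul; [apply Ccont_const|apply Ccont_expi_scal]|apply Ccont_const]. }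
  apply (is_CInt2PI_eq (is_CInt2PI_scal (Cdiv Ci a) _ _
           (is_CInt2PI_poly_approx_conj h (inv_affine_poly_approx _ _ Hq) Hc))).
  - intro s; unfold h.
    assert (He : Cexpi s <> C0) by (apply Cnorm_gt0_neq0; rewrite Cnorm_expi; lra).
    assert (Hl : affine a c (Cexpi s) <> C0)
      by (apply affine_neq0_on_circle; [lra|apply Cnorm_expi]).
    assert (Hl' := Hnz (-1 * s)).
    replace (-1 * s) with (- s) in * by ring; rewrite Cexpi_opp in *.
    unfold affine in *; field; repeat split; auto.
  - unfold h, affine; field; auto.
Qed.

Lemma inv_mul_partial_fraction a0 c0 a1 c1 P z :
  Csub (Cmul a0 c1) (Cmul a1 c0) <> C0 -> affine a0 c0 z <> C0 -> affine a1 c1 z <> C0 -> P <> C0 ->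
  Cinv (Cmul (affine a0 c0 z) (Cmul P (affine a1 c1 z))) =
  Csub (Cmul (Cdiv a0 (Csub (Cmul a0 c1) (Cmul a1 c0))) (Cinv (Cmul (affine a0 c0 z) P)))
       (Cmul (Cdiv a1 (Csub (Cmul a0 c1) (Cmul a1 c0))) (Cinv (Cmul P (affine a1 c1 z)))).
Proof. unfold affine; intros; field; repeat split; auto. Qed.

(* Residue theorem for a product of affine factors of which only the first
   vanishes inside the disc, at -c0/a0. *)
Lemma is_CInt2PI_inv_prod_one_pole n a0 c0 (a c : nat -> Cx) : Cnorm c0 < Cnorm a0 ->
  (forall i, (i < n)%nat -> Cnorm (a i) < Cnorm (c i)) ->
  is_CInt2PI
    (fun s => Cmul (Cinv (Cmul (affine a0 c0 (Cexpi s)) (Cprod n (fun i => affine (a i) (c i) (Cexpi s)))))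
                   (Cmul Ci (Cexpi s)))
    (Cmul (Cmul (RtoC (2 * PI)) Ci)
          (Cinv (Cmul a0 (Cprod n (fun i => affine (a i) (c i) (Copp (Cdiv c0 a0))))))).
Proof.
  intros H0; assert (Pc0 := Cnorm_ge0 c0); assert (Ha0 : a0 <> C0) by (apply Cnorm_gt0_neq0; lra).
  induction n as [|n IHn]; intro H; simpl.
  - apply (is_CInt2PI_eq (is_CInt2PI_inv_affine_pole a0 c0 H0)); intros; f_equal; f_equal; field.
  - assert (IH := IHn (fun i Hi => H i ltac:(lia))); assert (Hn := H n ltac:(lia)).
    set (D := Csub (Cmul a0 (c n)) (Cmul (a n) c0)).
    assert (HD : D <> C0).
    { apply Cnorm_gt0_neq0; unfold D, Csub; eapply Rlt_le_trans; [|apply Cnorm_reverse_triang].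
      rewrite Cnorm_opp, !Cnorm_mul; assert (Pa := Cnorm_ge0 (a n)); nra. }
    assert (Z := is_CInt2PI_inv_prod_no_pole (S n) a c H).
    apply (is_CInt2PI_eq (is_CInt2PI_sub _ _ _ _ (is_CInt2PI_scal (Cdiv a0 D) _ _ IH)
                                                (is_CInt2PI_scal (Cdiv (a n) D) _ _ Z))).
    + intro s; simpl.
      assert (L0 : affine a0 c0 (Cexpi s) <> C0)
        by (apply affine_neq0_on_circle; [lra|apply Cnorm_expi]).
      assert (Ln : affine (a n) (c n) (Cexpi s) <> C0)
        by (apply affine_neq0_on_circle; [lra|apply Cnorm_expi]).
      assert (P : Cprod n (fun i => affine (a i) (c i) (Cexpi s)) <> C0).
      { apply Cprod_neq0; intros i Hi; apply affine_neq0_on_circle; [|apply Cnorm_expi].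
        specialize (H i ltac:(lia)); lra. }
      unfold D; rewrite inv_mul_partial_fraction by auto; field; auto.
    + replace (affine (a n) (c n) (Copp (Cdiv c0 a0))) with (Cdiv D a0)
        by (unfold D, affine; field; auto).
      rewrite !Cinv_mul; set (Q := Cinv (Cprod n _)); field; auto.
Qed.

(** * Iterated integrals and diagonally dominant matrices *)

Lemma IterInt_S_innermost m : forall F G v,
  (forall t, CInt (fun s => F (fun j => if Nat.eqb j 0 then s else t j)) 0 (2 * PI)
                  (G (fun j => t (S j)))) ->
  IterInt m G v -> IterInt (S m) F v.
Proof.
  induction m as [|m IHm]; intros F G v HF HG.
  - simpl in HG |- *; subst v.
    exists (fun s => F (fun j => if Nat.eqb j 0 then s else 0)); split; [apply (HF (fun _ => 0))|].
    intros s _; reflexivity.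
  - destruct HG as [g [Hg Hs]]; exists g; split; auto.
    intros s Hs1; eapply IHm; [|exact (Hs s Hs1)]; intro t; cbv beta.
    replace (fun u => F (fun j => if Nat.eqb j (S m) then s else if Nat.eqb j 0 then u else t j))
      with (fun u => F (fun j => if Nat.eqb j 0 then u else if Nat.eqb j (S m) then s else t j))
      by (apply functional_extensionality; intro u; f_equal;
          apply functional_extensionality; intros [|j]; reflexivity).
    apply (HF (fun j => if Nat.eqb j (S m) then s else t j)).
Qed.

Lemma IterInt_scal m : forall c G v, IterInt m G v -> IterInt m (fun t => Cmul c (G t)) (Cmul c v).
Proof.
  induction m as [|m IHm]; intros c G v H; simpl in *; [subst; auto|].
  destruct H as [g [Hg Hs]]; exists (fun s => Cmul c (g s)); split.
  - apply is_CInt2PI_CInt, is_CInt2PI_scal, is_CInt2PI_CInt; auto.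
  - intros s Hs1; apply (IHm c _ _ (Hs s Hs1)).
Qed.

Definition offdiag_norm (k : nat) (A : mat) (i : nat) : R :=
  Rsum k (fun l => if Nat.eqb l i then 0 else Cnorm (A i l)).

Definition diag_dominant (k : nat) (A : mat) : Prop :=
  forall i, (i < k)%nat -> offdiag_norm k A i < Cnorm (A i i).

Lemma offdiag_norm_ge0 k A i : 0 <= offdiag_norm k A i.
Proof. apply Rsum_ge0; intros l _; destruct (Nat.eqb l i); [lra|apply Cnorm_ge0]. Qed.

Lemma offdiag_norm_0 n A : offdiag_norm (S n) A O = Rsum n (fun l => Cnorm (A O (S l))).
Proof. unfold offdiag_norm; rewrite Rsum_shift; simpl; ring. Qed.

Lemma offdiag_norm_S n A i :
  offdiag_norm (S n) A (S i) = Cnorm (A (S i) O) + offdiag_norm n (fun r l => A (S r) (S l)) i.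
Proof. unfold offdiag_norm; rewrite Rsum_shift; reflexivity. Qed.

Lemma mulv_Cnorm_ge k A z i : (forall l, (l < k)%nat -> Cnorm (z l) = 1) -> (i < k)%nat ->
  Cnorm (A i i) - offdiag_norm k A i <= Cnorm (mulv k A z i).
Proof.
  intros Hz Hi; unfold mulv; rewrite (Csum_extract k _ i Hi).
  eapply Rle_trans; [|apply Cnorm_reverse_triang]; rewrite Cnorm_mul, Hz, Rmult_1_r by auto.
  apply Rplus_le_compat_l, Ropp_le_contravar.
  eapply Rle_trans; [apply Cnorm_Csum|]; right; apply Rsum_ext; intros l Hl.
  destruct (Nat.eqb l i); [apply Cnorm_C0|rewrite Cnorm_mul, Hz; auto; ring].
Qed.

Lemma mulv_S k A z i :
  mulv (S k) A z i = affine (A i O) (Csum k (fun l => Cmul (A i (S l)) (z (S l)))) (z O).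
Proof. unfold mulv, affine; rewrite Csum_shift; reflexivity. Qed.

(* Eliminating z_0 with the first equation turns the remaining equations
   into those of the Schur complement. *)
Lemma mulv_schur n A (z : nat -> Cx) i : A O O <> C0 ->
  mulv n (schur A) (fun j => z (S j)) i =
  affine (A (S i) O) (Csum n (fun l => Cmul (A (S i) (S l)) (z (S l))))
         (Copp (Cdiv (Csum n (fun l => Cmul (A O (S l)) (z (S l)))) (A O O))).
Proof.
  intro H; unfold mulv, schur, affine.
  rewrite (Csum_ext n _ (fun l => Cadd (Cmul (A (S i) (S l)) (z (S l)))
        (Cmul (Copp (Cdiv (A (S i) O) (A O O))) (Cmul (A O (S l)) (z (S l)))))).
  - rewrite Csum_add, Csum_scal; field; auto.
  - intros l _; field; auto.
Qed.

Lemma diag_dominant_pivot_neq0 n A : diag_dominant (S n) A -> A O O <> C0.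
Proof.
  intro H; apply Cnorm_gt0_neq0; assert (H0 := H O ltac:(lia)).
  assert (P := offdiag_norm_ge0 (S n) A O); lra.
Qed.

Lemma diag_dominant_schur n A : diag_dominant (S n) A -> diag_dominant n (schur A).
Proof.
  intros H i Hi.
  assert (Ha0 := diag_dominant_pivot_neq0 n A H); assert (Pb := Cnorm_gt0 _ Ha0).
  assert (R0 := H O ltac:(lia)); rewrite offdiag_norm_0 in R0.
  assert (Ri := H (S i) ltac:(lia)); rewrite offdiag_norm_S in Ri.
  set (r := Cnorm (A (S i) O) / Cnorm (A O O)).
  assert (Pr : 0 <= r) by (apply Rmult_le_pos; [apply Cnorm_ge0|apply Rlt_le, Rinv_0_lt_compat; lra]).
  assert (Hr : r * Rsum n (fun l => Cnorm (A O (S l))) <= Cnorm (A (S i) O)).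
  { unfold r; apply (Rmult_le_reg_r (Cnorm (A O O))); [lra|].
    replace (Cnorm (A (S i) O) / Cnorm (A O O) * Rsum n (fun l => Cnorm (A O (S l))) * Cnorm (A O O))
      with (Cnorm (A (S i) O) * Rsum n (fun l => Cnorm (A O (S l)))) by (field; lra).
    apply Rmult_le_compat_l; [apply Cnorm_ge0|lra]. }
  assert (Hentry : forall l, Cnorm (schur A i l) <= Cnorm (A (S i) (S l)) + r * Cnorm (A O (S l))).
  { intro l; unfold schur; eapply Rle_trans; [apply Cnorm_sub|].
    rewrite Cnorm_mul, Cnorm_div by auto; unfold r, Rdiv; lra. }
  assert (Hdiag : Cnorm (A (S i) (S i)) - r * Cnorm (A O (S i)) <= Cnorm (schur A i i)).
  { unfold schur, Csub; eapply Rle_trans; [|apply Cnorm_reverse_triang].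
    rewrite Cnorm_opp, Cnorm_mul, Cnorm_div by auto; unfold r, Rdiv; lra. }
  assert (Hoff : offdiag_norm n (schur A) i <=
     offdiag_norm n (fun r l => A (S r) (S l)) i +
     r * Rsum n (fun l => if Nat.eqb l i then 0 else Cnorm (A O (S l)))).
  { unfold offdiag_norm; rewrite <- Rsum_scal, <- Rsum_add; apply Rsum_le; intros l _.
    destruct (Nat.eqb l i); [lra|apply Hentry]. }
  rewrite (Rsum_extract n (fun l => Cnorm (A O (S l))) i Hi) in Hr.
  lra.
Qed.

Definition torus_integrand (k : nat) (A : mat) (t : nat -> R) : Cx :=
  Cmul (Cinv (Cprod k (mulv k A (fun j => Cexpi (t j))))) (Cprod k (fun j => Cmul Ci (Cexpi (t j)))).

Lemma torus_integrand_inner n A t : diag_dominant (S n) A ->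
  CInt (fun s => torus_integrand (S n) A (fun j => if Nat.eqb j 0 then s else t j)) 0 (2 * PI)
    (Cmul (Cmul (Cmul (RtoC (2 * PI)) Ci) (Cinv (A O O)))
          (torus_integrand n (schur A) (fun j => t (S j)))).
Proof.
  intro HD; apply is_CInt2PI_CInt.
  assert (Ha0 := diag_dominant_pivot_neq0 n A HD).
  set (z := fun j => Cexpi (t j)).
  set (c := fun r => Csum n (fun l => Cmul (A r (S l)) (z (S l)))).
  assert (H0 : Cnorm (c O) < Cnorm (A O O)).
  { assert (R0 := HD O ltac:(lia)); rewrite offdiag_norm_0 in R0.
    eapply Rle_lt_trans; [apply Cnorm_Csum|]; eapply Rle_lt_trans; [|exact R0].
    right; apply Rsum_ext; intros l _; unfold z; rewrite Cnorm_mul, Cnorm_expi; ring. }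
  assert (Hs : forall i, (i < n)%nat -> Cnorm (A (S i) O) < Cnorm (c (S i))).
  { intros i Hi; assert (Ri := HD (S i) ltac:(lia)); rewrite offdiag_norm_S in Ri.
    assert (B := mulv_Cnorm_ge n (fun r l => A (S r) (S l)) (fun l => z (S l)) i
                   (fun l _ => Cnorm_expi _) Hi).
    unfold mulv in B; unfold c; lra. }
  apply (is_CInt2PI_eq (is_CInt2PI_scal (Cprod n (fun j => Cmul Ci (z (S j)))) _ _
           (is_CInt2PI_inv_prod_one_pole n (A O O) (c O) (fun i => A (S i) O) (fun i => c (S i)) H0 Hs))).
  - intro s; unfold torus_integrand.
    set (w := mulv (S n) A (fun j => Cexpi (if Nat.eqb j 0 then s else t j))).
    rewrite !Cprod_shift.
    replace (w O) with (affine (A O O) (c O) (Cexpi s)) by (unfold w; rewrite mulv_S; reflexivity).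
    rewrite (Cprod_ext n (fun i => w (S i)) (fun i => affine (A (S i) O) (c (S i)) (Cexpi s)))
      by (intros i _; unfold w; rewrite mulv_S; reflexivity).
    unfold z; simpl; ring.
  - unfold torus_integrand; cbv beta.
    rewrite (Cprod_ext n (mulv n (schur A) (fun j => Cexpi (t (S j))))
               (fun i => affine (A (S i) O) (c (S i)) (Copp (Cdiv (c O) (A O O)))))
      by (intros i _; apply (mulv_schur n A z i Ha0)).
    unfold z; rewrite !Cinv_mul; ring.
Qed.

Lemma torus_integral_diag_dominant k : forall A, diag_dominant k A -> det k A <> C0 /\
  IterInt k (torus_integrand k A) (Cmul (Cpow (Cmul (RtoC (2 * PI)) Ci) k) (Cinv (det k A))).
Proof.
  induction k as [|k IHk]; intros A HD.
  - split; simpl; [exact C1_neq_C0|]; unfold torus_integrand; simpl; field; exact C1_neq_C0.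
  - assert (Ha0 := diag_dominant_pivot_neq0 k A HD).
    destruct (IHk (schur A) (diag_dominant_schur k A HD)) as [Hdet HI].
    rewrite (CxMatrix.det_schur k A Ha0); split; [apply Cmul_neq0; auto|].
    set (K := Cmul (Cmul (RtoC (2 * PI)) Ci) (Cinv (A O O))).
    apply (IterInt_S_innermost k _ (fun t => Cmul K (torus_integrand k (schur A) t)));
      [intro t; apply torus_integrand_inner; auto|].
    apply (IterInt_scal _ K) in HI.
    replace (Cmul (Cpow (Cmul (RtoC (2 * PI)) Ci) (S k)) (Cinv (Cmul (A O O) (det k (schur A)))))
      with (Cmul K (Cmul (Cpow (Cmul (RtoC (2 * PI)) Ci) k) (Cinv (det k (schur A)))));
      [exact HI|unfold K; rewrite Cinv_mul; simpl; ring].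
Qed.

(* Cauchy-Schwarz: the l1-norm of a row of B is at most sqrt k * frob k B < 1 / sqrt k. *)
Lemma frob_row_sum_lt1 k B i : (1 <= k)%nat -> frob k B < 1 / INR k -> (i < k)%nat ->
  Rsum k (fun l => Cnorm (B i l)) < 1.
Proof.
  intros Hk Hf Hi.
  set (b := fun l => Cnorm (B i l)).
  assert (Pk : 1 <= INR k) by (apply (le_INR 1); auto).
  assert (Pb : 0 <= Rsum k b) by (apply Rsum_ge0; intros; apply Cnorm_ge0).
  assert (Pf : 0 <= frob k B) by apply sqrt_pos.
  assert (Row : Rsum k (fun l => b l * b l) <= frob k B * frob k B).
  { unfold frob; rewrite sqrt_sqrt
      by (apply Rsum_ge0; intros; apply Rsum_ge0; intros; apply Cnorm2_ge0).
    rewrite (Rsum_extract k (fun r => Rsum k (fun j => Cnorm2 (B r j))) i Hi).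
    assert (0 <= Rsum k (fun l => if Nat.eqb l i then 0 else Rsum k (fun j => Cnorm2 (B l j))))
      by (apply Rsum_ge0; intros l _; destruct (Nat.eqb l i);
          [lra|apply Rsum_ge0; intros; apply Cnorm2_ge0]).
    rewrite (Rsum_ext k _ (fun j => Cnorm2 (B i j))) by (intros; apply Cnorm_sq); lra. }
  assert (F2 : INR k * (frob k B * frob k B) < 1).
  { assert (Hsq : frob k B * frob k B < 1 / INR k * (1 / INR k))
      by (apply Rmult_le_0_lt_compat; auto).
    apply (Rmult_lt_compat_l (INR k)) in Hsq; [|lra].
    replace (INR k * (1 / INR k * (1 / INR k))) with (1 / INR k) in Hsq by (field; lra).
    assert (1 / INR k <= 1) by (unfold Rdiv; rewrite Rmult_1_l, <- Rinv_1;
                                apply Rinv_le_contravar; lra).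
    lra. }
  assert (CS := Rsum_sq_le k b).
  assert (Rsum k b * Rsum k b < 1) by (apply (Rmult_le_compat_l (INR k)) in Row; lra).
  nra.
Qed.

Lemma frob_lt_diag_dominant k A : (1 <= k)%nat -> frob k (sub_id A) < 1 / INR k -> diag_dominant k A.
Proof.
  intros Hk Hf i Hi.
  assert (Hrow := frob_row_sum_lt1 k (sub_id A) i Hk Hf Hi).
  rewrite (Rsum_extract k _ i Hi) in Hrow.
  replace (offdiag_norm k A i) with
    (Rsum k (fun l => if Nat.eqb l i then 0 else Cnorm (sub_id A i l))).
  - assert (Hii := Cnorm_reverse_triang C1 (sub_id A i i)); rewrite Cnorm_C1 in Hii.
    replace (Cadd C1 (sub_id A i i)) with (A i i) in Hii
      by (unfold sub_id, delta; rewrite Nat.eqb_refl; field).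
    lra.
  - apply Rsum_ext; intros l _; destruct (Nat.eqb_spec l i); auto.
    unfold sub_id, delta; destruct (Nat.eqb_spec i l); [lia|].
    f_equal; field.
Qed.

Theorem theorem2 (k : nat) (A : mat) :
  (1 <= k)%nat ->
  frob k (sub_id A) < 1 / INR k ->
  (forall z : nat -> Cx, (forall j, (j < k)%nat -> Cnorm (z j) = 1) ->
     Cprod k (mulv k A z) <> C0) /\
  det k A <> C0 /\
  exists v : Cx,
    TorusInt k (fun z => Cinv (Cprod k (mulv k A z))) v /\
    Cinv (det k A) = Cmul (Cinv (Cpow (Cmul (RtoC (2 * PI)) Ci) k)) v.
Proof.
  intros Hk Hf; assert (HD := frob_lt_diag_dominant k A Hk Hf).
  destruct (torus_integral_diag_dominant k A HD) as [Hdet HI].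
  split; [|split; auto].
  - intros z Hz; apply Cprod_neq0; intros i Hi; apply Cnorm_gt0_neq0.
    assert (B := mulv_Cnorm_ge k A z i Hz Hi); assert (H := HD i Hi); lra.
  - exists (Cmul (Cpow (Cmul (RtoC (2 * PI)) Ci) k) (Cinv (det k A))); split; [exact HI|].
    assert (H2pi : Cmul (RtoC (2 * PI)) Ci <> C0).
    { intro E; assert (E1 := f_equal Im E); simpl in E1; assert (P := PI_RGT_0); lra. }
    field; auto using Cpow_neq0.
Qed.
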